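(* Let $X$ be a spectral space and let $Y\subseteq X$. (1) Suppose that $\sup(F)$ exists in $X$ for every nonempty finite subset $F\subseteq Y$. Then $\sup(Z)$ exists for every nonempty subset $Z\subseteq Y$, and $Y_\infty\subseteq\mathrm{Cl}^\mathrm{cons}(Y_f)$. (2) Suppose that $\inf(F)$ exists in $X$ for every nonempty finite subset $F\subseteq Y$. Then $\inf(Z)$ exists for every nonempty subset $Z\subseteq Y$, and $Y_{(\infty)}\subseteq\mathrm{Cl}^\mathrm{cons}(Y_{(f)})$.
   Context: A spectral space is a topological space homeomorphic to the prime spectrum of a commutative unitary ring with the Zariski topology. On a spectral space $X$ the specialization order is defined by $x\leq y$ iff $y\in\mathrm{Cl}(\{x\})$; it is a partial order, and $\sup$, $\inf$ refer to this order. The constructible topology on $X$ is the coarsest topology for which every open and quasi-compact subset of $X$ is clopen; $\mathrm{Cl}^\mathrm{cons}$ denotes closure in it. For $Y\subseteq X$: $Y_f$ is the set of all $\sup(F)$ with $F\subseteq Y$ nonempty finite (whenever the supremum exists), $Y_\infty$ the set of all existing $\sup(Z)$ with $\emptyset\neq Z\subseteq Y$; $Y_{(f)}$ and $Y_{(\infty)}$ are defined in the same way with infima instead of suprema. *)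

From HB Require Import structures.
From mathcomp Require Import all_boot all_order all_algebra.
From mathcomp Require Import all_classical all_reals all_analysis.
Set Implicit Arguments. Unset Strict Implicit. Unset Printing Implicit Defensive.
Import GRing.Theory.
Local Open Scope classical_set_scope.
Local Open Scope ring_scope.

Definition prime_ideal (R : comPzRingType) (P : set R) : Prop :=
  [/\ P 0,
      (forall a b, P a -> P b -> P (a - b)),
      (forall r a, P a -> P (r * a)),
      ~ P 1 &
      (forall a b, P (a * b) -> P a \/ P b)].

Definition spec (R : comPzRingType) := {P : set R | prime_ideal P}.

Definition zariski_open (R : comPzRingType) (U : set (spec R)) : Prop :=
  exists S : set R, U = [set p : spec R | ~ (S `<=` proj1_sig p)].

Definition spectral (X : topologicalType) : Prop :=
  exists (R : comPzRingType) (f : X -> spec R),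
    bijective f /\ (forall U : set X, open U <-> zariski_open (f @` U)).

Definition spec_le (X : topologicalType) (x y : X) : Prop :=
  closure [set x] y.

Definition is_sup (X : topologicalType) (Z : set X) (s : X) : Prop :=
  (forall z, Z z -> spec_le z s) /\
  (forall u, (forall z, Z z -> spec_le z u) -> spec_le s u).

Definition is_inf (X : topologicalType) (Z : set X) (s : X) : Prop :=
  (forall z, Z z -> spec_le s z) /\
  (forall u, (forall z, Z z -> spec_le u z) -> spec_le u s).

Definition Y_f (X : topologicalType) (Y : set X) : set X :=
  [set s | exists F : set X, [/\ finite_set F, F !=set0, F `<=` Y & is_sup F s]].
Definition Y_infty (X : topologicalType) (Y : set X) : set X :=
  [set s | exists Z : set X, [/\ Z !=set0, Z `<=` Y & is_sup Z s]].
Definition Y_inf_f (X : topologicalType) (Y : set X) : set X :=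
  [set s | exists F : set X, [/\ finite_set F, F !=set0, F `<=` Y & is_inf F s]].
Definition Y_inf_infty (X : topologicalType) (Y : set X) : set X :=
  [set s | exists Z : set X, [/\ Z !=set0, Z `<=` Y & is_inf Z s]].

Definition is_topology (X : Type) (T : set (set X)) : Prop :=
  [/\ T setT,
      (forall A B, T A -> T B -> T (A `&` B)) &
      (forall (I : Type) (A : I -> set X), (forall i, T (A i)) ->
         T (\bigcup_(i in [set: I]) A i))].

(* Open and quasi-compact subsets of X (compact in mathcomp-analysis is
   quasi-compactness, no separation assumed). *)
Definition open_qc (X : topologicalType) (U : set X) : Prop :=
  open U /\ compact U.

(* Open sets of the constructible topology: those belonging to every
   topology in which every open quasi-compact set is clopen, i.e. the
   coarsest such topology. *)
Definition cons_open (X : topologicalType) (A : set X) : Prop :=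
  forall T : set (set X), is_topology T ->
    (forall U, open_qc U -> T U /\ T (~` U)) -> T A.

Definition cons_closure (X : topologicalType) (Y : set X) : set X :=
  [set x | forall A, cons_open A -> A x -> A `&` Y !=set0].

From mathcomp Require Import all_boot all_order all_algebra.
From mathcomp Require Import all_classical all_reals all_analysis.
Local Open Scope classical_set_scope.
Set Implicit Arguments. Unset Strict Implicit.

(* In Spec R the specialization order is inclusion of prime ideals, and
   directed unions and directed intersections of prime ideals are prime. The
   sups (infs) of the finite nonempty subsets of Z form a directed family, so
   the corresponding union (intersection) is the ideal of a point, which is
   the sup (inf) of that family and hence of Z.
   For the constructible closure it suffices to meet every basic neighbourhood
   U \ V of s, with U open and V quasi-compact open. For a sup s, the finite
   sups t lie below s, hence in U, and the open sets X \ cl{t} cover V, so by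
   compactness and directedness a single t avoids V. For an inf s, the finite
   infs lie above s, hence outside V, and since ideal s contains the
   intersection of their ideals, one of them lies in U = X \ V(S). *)

Section FiniteLubs.
Variables (T : Type) (le : T -> T -> Prop).
Hypothesis le_trans : forall x y z, le x y -> le y z -> le x z.

Definition lub (Z : set T) (s : T) : Prop :=
  (forall z, Z z -> le z s) /\ (forall u, (forall z, Z z -> le z u) -> le s u).

Definition has_finite_lubs (Y : set T) : Prop :=
  forall F : set T, finite_set F -> F !=set0 -> F `<=` Y -> exists s, lub F s.

Definition finite_lubs (Y : set T) : set T :=
  [set s | exists F : set T, [/\ finite_set F, F !=set0, F `<=` Y & lub F s]].

Lemma has_finite_lubsS (Z Y : set T) :
  Z `<=` Y -> has_finite_lubs Y -> has_finite_lubs Z.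
Proof. by move=> ZY hY F fF nF FZ; apply: hY => // x /FZ /ZY. Qed.

Lemma finite_lubsS (Z Y : set T) : Z `<=` Y -> finite_lubs Z `<=` finite_lubs Y.
Proof. by move=> ZY s [F [fF nF FZ sF]]; exists F; split => // x /FZ /ZY. Qed.

Lemma lub_le_subset (F G : set T) (s t : T) :
  F `<=` G -> lub F s -> lub G t -> le s t.
Proof. by move=> FG [_ sl] [tub _]; apply: sl => z /FG /tub. Qed.

Variable Z : set T.
Hypothesis hZ : has_finite_lubs Z.

Lemma finite_lubs_directed (s t : T) :
  finite_lubs Z s -> finite_lubs Z t ->
  exists2 u, finite_lubs Z u & le s u /\ le t u.
Proof.
move=> [F [fF [x Fx] FZ sF]] [G [fG _ GZ tG]].
have FGZ : F `|` G `<=` Z by move=> y [/FZ|/GZ].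
have [u uFG] : exists u, lub (F `|` G) u.
  by apply: hZ => //; [rewrite finite_setU|exists x; left].
exists u; first by exists (F `|` G); split => //; [rewrite finite_setU|exists x; left].
by split; [apply: (lub_le_subset _ sF uFG)|apply: (lub_le_subset _ tG uFG)];
  move=> y ?; [left|right].
Qed.

Lemma le_finite_lubs (z : T) : Z z -> exists2 t, finite_lubs Z t & le z t.
Proof.
move=> Zz; have Z1 : [set z] `<=` Z by move=> y ->.
have [t [tub tl]] : exists t, lub [set z] t.
  by apply: hZ; [exact: finite_set1|exists z|].
exists t; last exact: tub.
by exists [set z]; split; [exact: finite_set1|exists z| |].
Qed.

Lemma lub_finite_lubs (s : T) : lub (finite_lubs Z) s <-> lub Z s.
Proof.
have ub_lubs u : (forall z, Z z -> le z u) -> forall t, finite_lubs Z t -> le t u.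
  by move=> ub t [F [_ _ FZ [_ tl]]]; apply: tl => z /FZ /ub.
have ub_Z u : (forall t, finite_lubs Z t -> le t u) -> forall z, Z z -> le z u.
  by move=> ub z /le_finite_lubs [t /ub tu zt]; exact: le_trans tu.
split=> [[sub sl]|[sub sl]]; split.
- exact: ub_Z.
- by move=> u /ub_lubs; exact: sl.
- exact: ub_lubs.
- by move=> u /ub_Z; exact: sl.
Qed.

End FiniteLubs.

Lemma compact_directed_cover (T : topologicalType) (I : Type) (D : set I)
    (O : I -> set T) (V : set T) :
  compact V -> D !=set0 -> (forall i, D i -> open (O i)) ->
  (forall i j, D i -> D j -> exists2 k, D k & O i `|` O j `<=` O k) ->
  V `<=` \bigcup_(i in D) O i -> exists2 i, D i & V `<=` O i.
Proof.
move=> /compact_near_coveringP cV [i0 Di0] oO dirO VO.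
(* near-covering form of compactness, along the filter of upper sets of D *)
pose above i := [set j | D j /\ O i `<=` O j].
have Fabove : Filter (filter_from D above).
  apply: filter_from_filter; first by exists i0.
  move=> i j Di Dj; have [k Dk sk] := dirO i j Di Dj.
  exists k => // l [Dl skl]; split; split => // x Ox; apply: skl; apply: sk.
  - by left.
  - by right.
have near_O x : V x -> \forall x' \near x & j \near filter_from D above, O j x'.
  move=> /VO [i Di Oix]; exists (O i, above i); first split.
  - by apply: open_nbhs_nbhs; split => //; exact: oO.
  - by exists i.
  - by move=> [y j] [/= Oiy [_ sij]]; exact: sij.
have [i Di /(_ i) sV] := cV I _ (fun j x => O j x) Fabove near_O.
by exists i => //; apply: sV; split.
Qed.

(* [is_sup] and [Y_f] are [lub spec_le] and [finite_lubs spec_le] by conversion,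
   and [is_inf] and [Y_inf_f] likewise for [spec_ge]. *)
Definition spec_ge (X : topologicalType) (x y : X) : Prop := spec_le y x.

Section SpecializationOrder.
Variable X : topologicalType.
Implicit Types (x y z : X) (U V A B : set X).

Lemma spec_le_refl x : spec_le x x.
Proof. exact: subset_closure. Qed.

Lemma spec_le_closure x y : spec_le x y -> closure [set y] `<=` closure [set x].
Proof.
move=> xy; rewrite [X in _ `<=` X](closure_id _).1; last exact: closed_closure.
by apply: closureS => _ ->.
Qed.

Lemma spec_le_trans x y z : spec_le x y -> spec_le y z -> spec_le x z.
Proof. by move=> /spec_le_closure; apply. Qed.

Lemma spec_ge_trans x y z : spec_ge x y -> spec_ge y z -> spec_ge x z.
Proof. by move=> xy yz; exact: spec_le_trans yz xy. Qed.

Lemma open_spec_le U x y : open U -> spec_le x y -> U y -> U x.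
Proof.
move=> oU /(_ U) xy Uy; have [|_ [-> //]] := xy.
by apply: open_nbhs_nbhs; split.
Qed.

Definition patch_open A : Prop := forall x, A x ->
  exists U V, [/\ open U, open_qc V, U x /\ ~ V x & U `&` ~` V `<=` A].

Lemma patch_open_topology : is_topology patch_open.
Proof.
split.
- move=> x _; exists setT, set0; split => //.
  + exact: openT.
  + by split; [exact: open0|exact: compact0].
  + by split.
- move=> A1 A2 h1 h2 x [/h1 [U1 [V1 [oU1 [oV1 cV1] [U1x V1x] s1]]]
                       /h2 [U2 [V2 [oU2 [oV2 cV2] [U2x V2x] s2]]]].
  exists (U1 `&` U2), (V1 `|` V2); split.
  + exact: openI.
  + by split; [exact: openU|exact: compactU].
  + by split; [split|case].
  + move=> y [[U1y U2y] nV]; split.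
    * by apply: s1; split => // V1y; apply: nV; left.
    * by apply: s2; split => // V2y; apply: nV; right.
- move=> I A hA x [i _ /hA [U [V [oU qV [Ux Vx] sUV]]]].
  by exists U, V; split => // y /sUV Ay; exists i.
Qed.

Lemma cons_open_patch_open A : cons_open A -> patch_open A.
Proof.
move=> /(_ _ patch_open_topology); apply => W qW; split.
- move=> x Wx; exists W, set0; split.
  + by case: qW.
  + by split; [exact: open0|exact: compact0].
  + by split.
  + by move=> y [].
- by move=> x Wx; exists setT, W; split => //; exact: openT.
Qed.

Lemma cons_closure_patch B x :
  (forall U V, open U -> open_qc V -> U x -> ~ V x ->
     exists2 t, B t & U t /\ ~ V t) ->
  cons_closure B x.
Proof.
move=> hB A /cons_open_patch_open pA /pA [U [V [oU qV [Ux Vx] sA]]].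
by have [t Bt [Ut Vt]] := hB U V oU qV Ux Vx; exists t; split => //; apply: sA.
Qed.

End SpecializationOrder.

Lemma is_sup_patch_approx (X : topologicalType) (Z : set X) (s : X)
    (U V : set X) :
  has_finite_lubs (@spec_le X) Z -> Z !=set0 -> is_sup Z s ->
  open U -> open_qc V -> U s -> ~ V s ->
  exists2 t, finite_lubs (@spec_le X) Z t & U t /\ ~ V t.
Proof.
move=> hZ [z0 Zz0] sZ oU [oV cV] Us Vs.
have [t_le_s s_least] := (lub_finite_lubs (@spec_le_trans X) hZ s).2 sZ.
have [t0 Zt0 _] := le_finite_lubs hZ Zz0.
have Vcover : V `<=` \bigcup_(t in finite_lubs (@spec_le X) Z) ~` closure [set t].
  move=> v Vv; apply: contrapT => nv; apply: Vs; apply: (open_spec_le oV _ Vv).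
  by apply: s_least => t Zt; apply: contrapT => tv; apply: nv; exists t.
have oO t : finite_lubs (@spec_le X) Z t -> open (~` closure [set t]).
  by move=> _; apply: closed_openC; exact: closed_closure.
have dir t1 t2 : finite_lubs (@spec_le X) Z t1 -> finite_lubs (@spec_le X) Z t2 ->
    exists2 u, finite_lubs (@spec_le X) Z u &
      ~` closure [set t1] `|` ~` closure [set t2] `<=` ~` closure [set u].
  move=> Zt1 Zt2.
  have [u Zu [t1u t2u]] := finite_lubs_directed hZ Zt1 Zt2.
  exists u => // v [] nv uv; apply: nv.
  - exact: spec_le_closure t1u _ uv.
  - exact: spec_le_closure t2u _ uv.
have [t Zt Vt] := compact_directed_cover cV (ex_intro _ t0 Zt0) oO dir Vcover.
exists t => //; split; first exact: open_spec_le oU (t_le_s t Zt) Us.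
by move=> /Vt; apply; exact: spec_le_refl.
Qed.

Lemma Y_infty_sub_cons_closure (X : topologicalType) (Y : set X) :
  has_finite_lubs (@spec_le X) Y -> Y_infty Y `<=` cons_closure (Y_f Y).
Proof.
move=> hY s [Z [nZ ZY sZ]]; apply: cons_closure_patch => U V oU qV Us Vs.
have [t Zt UVt] := is_sup_patch_approx (has_finite_lubsS ZY hY) nZ sZ oU qV Us Vs.
by exists t => //; exact: finite_lubsS Zt.
Qed.

Section DirectedPrimeIdeals.
Variables (R : comPzRingType) (I : Type) (D : set I) (P : I -> set R).
Hypotheses (D_neq0 : D !=set0) (P_prime : forall i, D i -> prime_ideal (P i)).

Lemma prime_ideal_bigcup :
  (forall i j, D i -> D j -> exists2 k, D k & P i `|` P j `<=` P k) ->
  prime_ideal (\bigcup_(i in D) P i).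
Proof.
move=> dirP; have [i0 Di0] := D_neq0; split.
- by exists i0 => //; case: (P_prime Di0).
- move=> a b [i Di Pia] [j Dj Pjb]; have [k Dk sk] := dirP i j Di Dj.
  exists k => //; case: (P_prime Dk) => _ subP _ _ _.
  by apply: subP; apply: sk; [left|right].
- move=> r a [i Di Pia]; exists i => //.
  by case: (P_prime Di) => _ _ mulP _ _; exact: mulP.
- by move=> [i Di]; case: (P_prime Di).
- move=> a b [i Di]; case: (P_prime Di) => _ _ _ _ /[apply].
  by case=> ?; [left|right]; exists i.
Qed.

Lemma prime_ideal_bigcap :
  (forall i j, D i -> D j -> exists2 k, D k & P k `<=` P i `&` P j) ->
  prime_ideal (\bigcap_(i in D) P i).
Proof.
move=> dirP; have [i0 Di0] := D_neq0; split.
- by move=> i Di; case: (P_prime Di).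
- move=> a b Pa Pb i Di; case: (P_prime Di) => _ subP _ _ _.
  by apply: subP; [exact: Pa|exact: Pb].
- move=> r a Pa i Di; case: (P_prime Di) => _ _ mulP _ _.
  by apply: mulP; exact: Pa.
- by move=> P1; case: (P_prime Di0) => _ _ _ + _; apply; exact: P1.
- move=> a b Pab; apply: contrapT => /not_orP[/existsNP[i /not_implyP[Di nPia]]].
  move=> /existsNP[j /not_implyP[Dj nPjb]]; have [k Dk sk] := dirP i j Di Dj.
  case: (P_prime Dk) => _ _ _ _ /(_ a b (Pab k Dk)).
  by case=> /sk[]; [move=> /nPia|move=> _ /nPjb].
Qed.

End DirectedPrimeIdeals.

Section SpectralSpace.
Variables (X : topologicalType) (R : comPzRingType) (f : X -> spec R).
Hypotheses (f_bij : bijective f)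
  (f_open : forall U : set X, open U <-> zariski_open (f @` U)).

Let ideal (x : X) : set R := sval (f x).

Lemma open_ideal (U : set X) :
  open U -> exists S : set R, forall x, U x <-> ~ S `<=` ideal x.
Proof.
move=> /f_open[S fU]; exists S => x.
have -> : U x <-> (f @` U) (f x).
  by split=> [|[y Uy /(bij_inj f_bij) <-]]; [exists x|].
by rewrite fU.
Qed.

Lemma open_not_in_ideal (a : R) : open [set x | ~ ideal x a].
Proof.
apply/f_open; exists [set a]; apply/seteqP; split=> [_ [x nxa <-] xa|q nqa].
  by apply: nxa; apply: xa.
have [g fgK gfK] := f_bij; exists (g q); last exact: gfK.
by rewrite /= /ideal gfK => qa; apply: nqa => _ ->.
Qed.

Lemma spec_le_ideal (x y : X) : spec_le x y <-> ideal x `<=` ideal y.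
Proof.
split=> [xy a xa|xy B].
  apply: contrapT => nya.
  by have /(_ xa) := open_spec_le (open_not_in_ideal a) xy nya.
rewrite nbhsE => -[U [oU Uy] UB]; exists x; split => //; apply: UB.
have [S US] := open_ideal oU.
by apply/US => Sx; move/US: Uy; apply=> a /Sx /xy.
Qed.

Lemma ideal_surj (Q : set R) : prime_ideal Q -> exists x, ideal x = Q.
Proof.
move=> pQ; have [g fgK gfK] := f_bij.
by exists (g (exist _ Q pQ)); rewrite /ideal gfK.
Qed.

Lemma is_sup_bigcup (D : set X) (s : X) :
  ideal s = \bigcup_(t in D) ideal t -> is_sup D s.
Proof.
move=> Ds; split=> [t Dt|u ub]; apply/spec_le_ideal; rewrite Ds.
  by move=> a ta; exists t.
by move=> a [t /ub /spec_le_ideal]; apply.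
Qed.

Lemma is_inf_bigcap (D : set X) (s : X) :
  ideal s = \bigcap_(t in D) ideal t -> is_inf D s.
Proof.
move=> Ds; split=> [t Dt|u lb]; apply/spec_le_ideal; rewrite Ds.
  by move=> a; apply.
by move=> a ua t /lb /spec_le_ideal; apply.
Qed.

Lemma exists_ideal_bigcup (D : set X) : D !=set0 ->
  (forall t1 t2, D t1 -> D t2 -> exists2 u, D u & spec_le t1 u /\ spec_le t2 u) ->
  exists s, ideal s = \bigcup_(t in D) ideal t.
Proof.
move=> D_neq0 dirD; apply: ideal_surj; apply: prime_ideal_bigcup => //.
  by move=> t _; exact: proj2_sig.
move=> t1 t2 Dt1 Dt2.
have [u Du [/spec_le_ideal t1u /spec_le_ideal t2u]] := dirD t1 t2 Dt1 Dt2.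
by exists u => // a [/t1u|/t2u].
Qed.

Lemma exists_ideal_bigcap (D : set X) : D !=set0 ->
  (forall t1 t2, D t1 -> D t2 -> exists2 u, D u & spec_ge t1 u /\ spec_ge t2 u) ->
  exists s, ideal s = \bigcap_(t in D) ideal t.
Proof.
move=> D_neq0 dirD; apply: ideal_surj; apply: prime_ideal_bigcap => //.
  by move=> t _; exact: proj2_sig.
move=> t1 t2 Dt1 Dt2.
have [u Du [/spec_le_ideal ut1 /spec_le_ideal ut2]] := dirD t1 t2 Dt1 Dt2.
by exists u => // a ua; split; [exact: ut1|exact: ut2].
Qed.

Lemma spectral_sup_exists (Z : set X) :
  has_finite_lubs (@spec_le X) Z -> Z !=set0 -> exists s, is_sup Z s.
Proof.
move=> hZ [z0 Zz0]; have [t0 Zt0 _] := le_finite_lubs hZ Zz0.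
have [s Ds] := exists_ideal_bigcup (ex_intro _ t0 Zt0) (finite_lubs_directed hZ).
by exists s; apply/(lub_finite_lubs (@spec_le_trans X) hZ); exact: is_sup_bigcup.
Qed.

Lemma spectral_inf_exists (Z : set X) :
  has_finite_lubs (@spec_ge X) Z -> Z !=set0 -> exists s, is_inf Z s.
Proof.
move=> hZ [z0 Zz0]; have [t0 Zt0 _] := le_finite_lubs hZ Zz0.
have [s Ds] := exists_ideal_bigcap (ex_intro _ t0 Zt0) (finite_lubs_directed hZ).
by exists s; apply/(lub_finite_lubs (@spec_ge_trans X) hZ); exact: is_inf_bigcap.
Qed.

Lemma is_inf_patch_approx (Z : set X) (s : X) (U V : set X) :
  has_finite_lubs (@spec_ge X) Z -> Z !=set0 -> is_inf Z s ->
  open U -> open V -> U s -> ~ V s ->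
  exists2 t, finite_lubs (@spec_ge X) Z t & U t /\ ~ V t.
Proof.
move=> hZ [z0 Zz0] sZ oU oV Us Vs.
have [s_le_t s_greatest] := (lub_finite_lubs (@spec_ge_trans X) hZ s).2 sZ.
have [t0 Zt0 _] := le_finite_lubs hZ Zz0.
have [s' Ds'] := exists_ideal_bigcap (ex_intro _ t0 Zt0) (finite_lubs_directed hZ).
have /spec_le_ideal s'_le_s : spec_le s' s.
  by apply: s_greatest; exact: (is_inf_bigcap Ds').1.
have [S US] := open_ideal oU.
apply: contrapT => noU; move/US: Us; apply=> a Sa.
apply: s'_le_s; rewrite Ds' => t Zt.
apply: contrapT => nta; apply: noU; exists t => //; split.
  by apply/US => /(_ a Sa).
by move=> Vt; apply: Vs; exact: open_spec_le oV (s_le_t t Zt) Vt.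
Qed.

Lemma Y_inf_infty_sub_cons_closure (Y : set X) :
  has_finite_lubs (@spec_ge X) Y -> Y_inf_infty Y `<=` cons_closure (Y_inf_f Y).
Proof.
move=> hY s [Z [nZ ZY sZ]]; apply: cons_closure_patch => U V oU [oV _] Us Vs.
have [t Zt UVt] := is_inf_patch_approx (has_finite_lubsS ZY hY) nZ sZ oU oV Us Vs.
by exists t => //; exact: finite_lubsS Zt.
Qed.

End SpectralSpace.

Theorem theorem3p1 (X : topologicalType) (Y : set X) :
  spectral X ->
  ((forall F : set X, finite_set F -> F !=set0 -> F `<=` Y ->
       exists s, is_sup F s) ->
     (forall Z : set X, Z !=set0 -> Z `<=` Y -> exists s, is_sup Z s) /\
     Y_infty Y `<=` cons_closure (Y_f Y)) /\
  ((forall F : set X, finite_set F -> F !=set0 -> F `<=` Y ->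
       exists s, is_inf F s) ->
     (forall Z : set X, Z !=set0 -> Z `<=` Y -> exists s, is_inf Z s) /\
     Y_inf_infty Y `<=` cons_closure (Y_inf_f Y)).
Proof.
case=> R [f [f_bij f_open]]; split=> hY; split.
- move=> Z nZ ZY.
  exact: (spectral_sup_exists f_bij f_open (has_finite_lubsS ZY hY) nZ).
- exact: Y_infty_sub_cons_closure.
- move=> Z nZ ZY.
  exact: (spectral_inf_exists f_bij f_open (has_finite_lubsS ZY hY) nZ).
- exact: (Y_inf_infty_sub_cons_closure f_bij f_open hY).
Qed.
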